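(* Let $\Phi:M_n(\mathbb{C})\to M_n(\mathbb{C})$ be a completely positive map with Kraus operators $K_1,\ldots,K_d\in M_n(\mathbb{C})$, i.e. $\Phi(X)=\sum_{j\in[d]}K_jXK_j^*$, and suppose $\Phi$ is Hermitian, i.e. $\Phi=\Phi^*$ where $\Phi^*$ is the adjoint with respect to the Hilbert–Schmidt inner product ($\operatorname{tr}(X\Phi^*(Y))=\operatorname{tr}(\Phi(X)Y)$ for all $X,Y$). For $K\in M_n(\mathbb{C})$ put $K_R=(K+K^* )/2$ and $K_I=-i(K-K^* )/2$. Then the $2d$ Hermitian matrices $K_{1,R},K_{1,I},\ldots,K_{d,R},K_{d,I}$ are Kraus operators for $\Phi$, i.e. $\Phi(X)=\sum_{j\in[d]}\big(K_{j,R}XK_{j,R}+K_{j,I}XK_{j,I}\big)$ for all $X\in M_n(\mathbb{C})$. In particular every Hermitian completely positive map on $M_n(\mathbb{C})$ admits a Kraus representation with at most twice its Kraus rank many Hermitian Kraus operators.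
   Context: The Kraus rank of a completely positive map is the smallest $d$ for which a representation $\Phi(X)=\sum_{j\in[d]}K_jXK_j^*$ exists. *)

From mathcomp Require Import all_boot all_order all_algebra.
Set Implicit Arguments. Unset Strict Implicit. Unset Printing Implicit Defensive.
Import Order.TTheory GRing.Theory Num.Theory.
Local Open Scope ring_scope.

Definition ctrmx (C : numClosedFieldType) (n : nat) (A : 'M[C]_n) : 'M[C]_n :=
  (map_mx Num.conj A)^T.

Definition kraus_map (C : numClosedFieldType) (n d : nat)
  (K : 'I_d -> 'M[C]_n) (X : 'M[C]_n) : 'M[C]_n :=
  \sum_(j < d) (K j *m X *m ctrmx (K j)).

Definition hermitian_map (C : numClosedFieldType) (n : nat)
  (Phi : 'M[C]_n -> 'M[C]_n) : Prop :=
  forall X Y : 'M[C]_n, \tr (X *m Phi Y) = \tr (Phi X *m Y).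

Definition hermitian_mx (C : numClosedFieldType) (n : nat) (A : 'M[C]_n) : Prop :=
  ctrmx A = A.

Definition re_mx (C : numClosedFieldType) (n : nat) (K : 'M[C]_n) : 'M[C]_n :=
  (2%:R)^-1 *: (K + ctrmx K).
Definition im_mx (C : numClosedFieldType) (n : nat) (K : 'M[C]_n) : 'M[C]_n :=
  (- Num.imaginary / 2%:R) *: (K - ctrmx K).

Definition kraus_representable (C : numClosedFieldType) (n : nat)
  (Phi : 'M[C]_n -> 'M[C]_n) (r : nat) : Prop :=
  exists L : 'I_r -> 'M[C]_n, forall X, Phi X = kraus_map L X.

Definition is_kraus_rank (C : numClosedFieldType) (n : nat)
  (Phi : 'M[C]_n -> 'M[C]_n) (r : nat) : Prop :=
  kraus_representable Phi r /\
  forall r', kraus_representable Phi r' -> (r <= r')%N.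

From mathcomp Require Import all_boot all_order all_algebra.
Set Implicit Arguments. Unset Strict Implicit. Unset Printing Implicit Defensive.
Import Order.TTheory GRing.Theory Num.Theory.
Local Open Scope ring_scope.

(* Since Phi is Hermitian, Phi(X) = sum_j K_j X K_j^* = sum_j K_j^* X K_j
   (trace duality, tested against matrix units).  Averaging the two forms gives
   (1/2) sum_j (K_j X K_j^* + K_j^* X K_j), and expanding K = K_R + i K_I shows
   K_R X K_R + K_I X K_I is exactly (1/2)(K X K^* + K^* X K): the cross terms
   cancel.  Applied to a representation of minimal length r this yields 2r
   Hermitian Kraus operators. *)

Section Trace.
Variables (R : comPzSemiRingType) (n : nat).
Implicit Types A B : 'M[R]_n.

Lemma mxtrace_delta_mulmx A (i j : 'I_n) : \tr (delta_mx j i *m A) = A i j.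
Proof.
rewrite /mxtrace (bigD1 j) //= big1 ?addr0.
  rewrite mxE (bigD1 i) //= big1 ?addr0 ?mxE ?eqxx ?mul1r //.
  by move=> k /negbTE nk; rewrite mxE nk andbF mul0r.
by move=> k /negbTE nk; rewrite mxE big1 // => l _; rewrite mxE nk /= mul0r.
Qed.

Lemma mxtrace_mulmx_inj A B : (forall X, \tr (X *m A) = \tr (X *m B)) -> A = B.
Proof. by move=> eqAB; apply/matrixP => i j; rewrite -!mxtrace_delta_mulmx eqAB. Qed.

End Trace.

Section ConjugateTranspose.
Variables (C : numClosedFieldType) (n : nat).
Implicit Types A B : 'M[C]_n.

Lemma ctrmxK : involutive (@ctrmx C n).
Proof. by move=> A; apply/matrixP => i j; rewrite !mxE conjCK. Qed.

Lemma ctrmxD A B : ctrmx (A + B) = ctrmx A + ctrmx B.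
Proof. by apply/matrixP => i j; rewrite !mxE rmorphD. Qed.

Lemma ctrmxN A : ctrmx (- A) = - ctrmx A.
Proof. by apply/matrixP => i j; rewrite !mxE rmorphN. Qed.

Lemma ctrmxZ a A : ctrmx (a *: A) = a^* *: ctrmx A.
Proof. by apply/matrixP => i j; rewrite !mxE rmorphM. Qed.

Lemma re_mx_hermitian A : hermitian_mx (re_mx A).
Proof.
by rewrite /hermitian_mx /re_mx ctrmxZ ctrmxD ctrmxK fmorphV rmorph_nat addrC.
Qed.

Lemma im_mx_hermitian A : hermitian_mx (im_mx A).
Proof.
have conj_coef : ((- 'i / 2%:R) : C)^* = - (- 'i / 2%:R).
  by rewrite rmorphM rmorphN /= conjCi fmorphV rmorph_nat opprK mulNr opprK.
rewrite /hermitian_mx /im_mx ctrmxZ ctrmxD ctrmxN ctrmxK conj_coef.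
by rewrite -[A - _]opprB scalerN scaleNr.
Qed.

Lemma re_im_sandwich A X :
  re_mx A *m X *m re_mx A + im_mx A *m X *m im_mx A =
  2%:R^-1 *: (A *m X *m ctrmx A + ctrmx A *m X *m A).
Proof.
rewrite /re_mx /im_mx -!scalemxAl -!scalemxAr !scalerA.
have sqr_coef : (- 'i / 2%:R * (- 'i / 2%:R) : C) = - (2%:R^-1 / 2%:R).
  by rewrite mulrACA mulrNN -expr2 sqrCi mulN1r.
rewrite sqr_coef scaleNr -scalerBr.
rewrite !mulmxDl !mulmxDr !mulmxN !mulNmx opprK.
set a := A *m X *m A; set b := A *m X *m ctrmx A.
set c := ctrmx A *m X *m A; set e := ctrmx A *m X *m ctrmx A.
have -> : a + b + (c + e) - (a - b + (- c + e)) = 2%:R *: (b + c).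
  rewrite scaler_nat mulr2n [RHS]addrACA opprD opprB opprD opprK [b - a]addrC.
  by rewrite [LHS]addrACA [X in X + _]addrACA subrr add0r [X in _ + X]addrACA subrr addr0.
by rewrite scalerA -mulrA mulVf ?mulr1 // pnatr_eq0.
Qed.

End ConjugateTranspose.

Section KrausMaps.
Variables (C : numClosedFieldType) (n : nat).

Lemma kraus_map_cast m m' (e : m = m') (L : 'I_m' -> 'M[C]_n) X :
  kraus_map (fun i => L (cast_ord e i)) X = kraus_map L X.
Proof. by case: m' / e L => L; apply: eq_bigr => i _; rewrite cast_ord_id. Qed.

Definition kraus_cat {p q} (L1 : 'I_p -> 'M[C]_n) (L2 : 'I_q -> 'M[C]_n)
    (i : 'I_(p + q)) : 'M[C]_n :=
  match split i with inl j => L1 j | inr k => L2 k end.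

Lemma kraus_map_cat p q (L1 : 'I_p -> 'M[C]_n) (L2 : 'I_q -> 'M[C]_n) X :
  kraus_map (kraus_cat L1 L2) X = kraus_map L1 X + kraus_map L2 X.
Proof.
rewrite /kraus_map big_split_ord /kraus_cat; congr (_ + _); apply: eq_bigr => i _.
  by rewrite (unsplitK (inl i)).
by rewrite (unsplitK (inr i)).
Qed.

Lemma hermitian_kraus_map_ctrmx d (K : 'I_d -> 'M[C]_n) X :
  hermitian_map (kraus_map K) ->
  kraus_map K X = kraus_map (fun j => ctrmx (K j)) X.
Proof.
move=> hermK; apply: mxtrace_mulmx_inj => Y.
rewrite hermK /kraus_map mulmx_suml mulmx_sumr !linear_sum /=.
by apply: eq_bigr => j _; rewrite ctrmxK -!mulmxA [LHS]mxtrace_mulC -!mulmxA.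
Qed.

Lemma hermitian_kraus_map_re_im d (K : 'I_d -> 'M[C]_n) X :
  hermitian_map (kraus_map K) ->
  kraus_map K X =
  \sum_(j < d) (re_mx (K j) *m X *m re_mx (K j) + im_mx (K j) *m X *m im_mx (K j)).
Proof.
move=> hermK; under eq_bigr => j _ do rewrite re_im_sandwich.
have dualK : \sum_(j < d) ctrmx (K j) *m X *m K j = kraus_map K X.
  by rewrite (hermitian_kraus_map_ctrmx X hermK); apply: eq_bigr => j _; rewrite ctrmxK.
rewrite -scaler_sumr big_split /= dualK.
by rewrite -mulr2n -scaler_nat scalerA mulVf ?scale1r // pnatr_eq0.
Qed.

Definition hermitian_kraus_ops {d} (K : 'I_d -> 'M[C]_n) : 'I_(d + d) -> 'M[C]_n :=
  kraus_cat (fun j => re_mx (K j)) (fun j => im_mx (K j)).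

Lemma hermitian_kraus_ops_hermitian d (K : 'I_d -> 'M[C]_n) i :
  hermitian_mx (hermitian_kraus_ops K i).
Proof.
by rewrite /hermitian_kraus_ops /kraus_cat; case: split => j;
  [apply: re_mx_hermitian | apply: im_mx_hermitian].
Qed.

Lemma kraus_map_hermitian_kraus_ops d (K : 'I_d -> 'M[C]_n) X :
  hermitian_map (kraus_map K) ->
  kraus_map K X = kraus_map (hermitian_kraus_ops K) X.
Proof.
move=> hermK; rewrite kraus_map_cat (hermitian_kraus_map_re_im _ hermK) big_split /=.
by congr (_ + _); apply: eq_bigr => j _; rewrite (re_mx_hermitian, im_mx_hermitian).
Qed.

End KrausMaps.

Theorem mainTheorem6 (C : numClosedFieldType) (n d : nat) (K : 'I_d -> 'M[C]_n) :
  hermitian_map (kraus_map K) ->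
  (forall j, hermitian_mx (re_mx (K j)) /\ hermitian_mx (im_mx (K j))) /\
  (forall X : 'M[C]_n,
      kraus_map K X =
      \sum_(j < d) (re_mx (K j) *m X *m re_mx (K j) + im_mx (K j) *m X *m im_mx (K j))) /\
  (forall r : nat, is_kraus_rank (kraus_map K) r ->
      exists L : 'I_(2 * r) -> 'M[C]_n,
        (forall i, hermitian_mx (L i)) /\
        forall X : 'M[C]_n, kraus_map K X = kraus_map L X).
Proof.
move=> hermK; split; first by move=> j; split; [exact: re_mx_hermitian | exact: im_mx_hermitian].
split=> [X | r [[L defK] _]]; first exact: hermitian_kraus_map_re_im.
have hermL : hermitian_map (kraus_map L) by move=> X Y; rewrite -!defK.
have e : (2 * r = r + r)%N by rewrite mul2n addnn.
exists (fun i => hermitian_kraus_ops L (cast_ord e i)); split=> [i | X].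
  exact: hermitian_kraus_ops_hermitian.
by rewrite kraus_map_cast defK -kraus_map_hermitian_kraus_ops.
Qed.
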